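(* Let $G$ be a simple plane graph on $n\geq 2$ vertices that contains neither $K_4$ nor $C_5$ as a subgraph, and such that every maximal $2$-connected subgraph of $G$ has at most $4$ vertices. Then $e(G)\leq 2n-\frac{15}{7}$.
   Context: $K_4$ is the complete graph on $4$ vertices, $C_5$ the cycle on $5$ vertices; $e(G)$ is the number of edges of $G$. A maximal $2$-connected subgraph (a block) is understood in the usual sense, where a single edge (bridge) counts as a block on $2$ vertices. *)

From HB Require Import structures.
From mathcomp Require Import all_boot all_order all_algebra.
From mathcomp Require Import all_classical all_reals all_analysis.
From mathcomp Require Import Rstruct Rstruct_topology.
From Stdlib Require Import Rdefinitions.

Set Implicit Arguments.
Unset Strict Implicit.
Unset Printing Implicit Defensive.

Import Order.TTheory GRing.Theory Num.Theory.

Definition simple_graph (T : finType) (e : rel T) : Prop :=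
  symmetric e /\ irreflexive e.

Definition edge_set (T : finType) (e : rel T) : {set {set T}} :=
  [set E : {set T} | [exists x, exists y, e x y && (E == [set x; y])]].

Definition num_edges (T : finType) (e : rel T) : nat := #|edge_set e|.

Definition has_K4 (T : finType) (e : rel T) : Prop :=
  exists f : 'I_4 -> T, injective f /\ forall i j : 'I_4, i != j -> e (f i) (f j).

Definition has_C5 (T : finType) (e : rel T) : Prop :=
  exists f : 'I_5 -> T, injective f /\
    forall i : 'I_5, e (f i) (f (inord ((i.+1) %% 5) : 'I_5)).

Definition induced_connected (T : finType) (e : rel T) (S : {set T}) : bool :=
  [forall x in S, forall y in S,
     connect [rel a b | [&& e a b, a \in S & b \in S]] x y].

(* G[S] is 2-connected in the block sense: at least 2 vertices, connected,
   and without a cut vertex (so K_2, i.e. a bridge, qualifies). *)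
Definition biconnected (T : finType) (e : rel T) (S : {set T}) : bool :=
  [&& 1 < #|S|, induced_connected e S &
      [forall v in S, induced_connected e (S :\ v)]].

(* A block: a maximal 2-connected subgraph (bridges included). Maximal
   2-connected subgraphs are induced, so they are described by vertex sets. *)
Definition is_block (T : finType) (e : rel T) (S : {set T}) : Prop :=
  biconnected e S /\ forall S' : {set T}, S \proper S' -> ~~ biconnected e S'.

Definition plane := (R * R)%type.

Local Open Scope classical_set_scope.
Local Open Scope ring_scope.

Definition jordan_arc (g : R -> plane) (a b : plane) : Prop :=
  {within `[0%R, 1%R], continuous g} /\
  {in `[0%R, 1%R] &, injective g} /\ g 0 = a /\ g 1 = b.

Definition plane_embedding (T : finType) (e : rel T)
    (pos : T -> plane) (arc : T -> T -> R -> plane) : Prop :=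
  injective pos /\
  (forall x y, e x y -> jordan_arc (arc x y) (pos x) (pos y)) /\
  (forall x y w (s : R), e x y -> 0 < s < 1 -> arc x y s != pos w) /\
  (forall x y u v (s t : R), e x y -> e u v -> [set x; y] != [set u; v] ->
      0 < s < 1 -> 0 < t < 1 -> arc x y s != arc u v t).

Definition planar (T : finType) (e : rel T) : Prop :=
  exists pos arc, @plane_embedding T e pos arc.

From mathcomp Require Import all_boot all_order all_algebra.
From mathcomp Require Import Rstruct.
From Stdlib Require Import Rdefinitions.
From mathcomp Require Import zify lra.

Set Implicit Arguments.
Unset Strict Implicit.
Unset Printing Implicit Defensive.

Import Order.TTheory GRing.Theory Num.Theory.

(* A block with k <= 4 vertices spans at most 2k - 3 edges: 1, 3 or 5 for
   k = 2, 3, 4, since a K_4-free graph on four vertices misses an edge. A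
   graph on at least two vertices that is not 2-connected splits into two
   smaller parts meeting in at most one vertex (a cut vertex) with every edge
   inside one part, so its edge count is additive; the bound 2n - 3 survives
   this gluing (a one-vertex part has no edges), and induction on n gives
   e(G) <= 2n - 3 <= 2n - 15/7. *)

Section BlockBound.

Variables (T : finType) (e : rel T).
Hypotheses (e_sym : symmetric e) (e_irr : irreflexive e).

Definition edges_in (X : {set T}) : {set {set T}} :=
  edge_set e :&: powerset X.

Definition num_edges_in (X : {set T}) : nat := #|edges_in X|.

Lemma edge_setP (E : {set T}) :
  reflect (exists x y, e x y /\ E = [set x; y]) (E \in edge_set e).
Proof.
rewrite inE; apply: (iffP existsP) => [[x /existsP[y /andP[exy /eqP ->]]]|].
  by exists x, y.
by case=> x [y [exy ->]]; exists x; apply/existsP; exists y; rewrite exy eqxx.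
Qed.

Lemma card_edge (E : {set T}) : E \in edge_set e -> #|E| = 2.
Proof.
case/edge_setP=> x [y [exy ->]]; rewrite cards2.
by case: eqVneq exy => // ->; rewrite e_irr.
Qed.

Lemma edge_set2 (x y : T) : x != y -> ([set x; y] \in edge_set e) = e x y.
Proof.
move=> neq_xy; apply/edge_setP/idP => [[a [b [eab Exy]]]|exy]; last first.
  by exists x, y.
have [] : x \in [set a; b] /\ y \in [set a; b] by rewrite -Exy set21 set22.
rewrite !inE => /orP[]/eqP Ex /orP[]/eqP Ey; move: neq_xy eab;
  by rewrite Ex Ey ?eqxx // e_sym.
Qed.

Lemma num_edges_inT : num_edges_in [set: T] = num_edges e.
Proof. by rewrite /num_edges_in /edges_in powersetT setIT. Qed.

Lemma num_edges_in_le_bin (X : {set T}) : num_edges_in X <= 'C(#|X|, 2).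
Proof.
rewrite -cards_draws; apply/subset_leq_card/subsetP => E /setIP[/card_edge E2].
by rewrite powersetE inE E2 eqxx andbT.
Qed.

Lemma num_edges_in_clique (X : {set T}) : num_edges_in X = 'C(#|X|, 2) ->
  {in X &, forall x y, x != y -> e x y}.
Proof.
rewrite -cards_draws => eq_card_XE x y Xx Xy neq_xy.
have sub_XE : edges_in X \subset [set E : {set T} | E \subset X & #|E| == 2].
  apply/subsetP => E /setIP[/card_edge E2].
  by rewrite powersetE inE E2 eqxx andbT.
have /subset_cardP/(_ sub_XE)/(_ [set x; y]) := eq_card_XE.
rewrite in_setI powersetE edge_set2 // inE cards2 neq_xy subUset !sub1set Xx Xy.
by case/andP.
Qed.

Lemma num_edges_inU (A B : {set T}) : #|A :&: B| <= 1 ->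
    {in A :|: B &, forall x y, e x y ->
       (x \in A) && (y \in A) || (x \in B) && (y \in B)} ->
  num_edges_in (A :|: B) = num_edges_in A + num_edges_in B.
Proof.
move=> AB_le1 AB_edges.
have edgesU : edges_in (A :|: B) = edges_in A :|: edges_in B.
  rewrite /edges_in -setIUr; apply/setP => E; rewrite !in_setI.
  case: edge_setP => //= -[x [y [exy ->]]]; rewrite in_setU !powersetE.
  apply/idP/idP => [sub_xy|]; last first.
    by case/orP=> /subset_trans; apply; rewrite ?subsetUl ?subsetUr.
  have /andP[xAB yAB] : (x \in A :|: B) && (y \in A :|: B).
    by rewrite -!sub1set -subUset.
  by case/orP: (AB_edges x y xAB yAB exy) => /andP[xX yX];
    rewrite !subUset !sub1set xX yX ?orbT.
rewrite /num_edges_in edgesU cardsU.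
suff -> : edges_in A :&: edges_in B = set0 by rewrite cards0 subn0.
apply/setP => E; rewrite inE in_set0; apply/negP.
case/andP=> /setIP[/card_edge E2]; rewrite powersetE => EA /setIP[_].
rewrite powersetE => EB; have : E \subset A :&: B by rewrite subsetI EA EB.
by move/subset_leq_card; rewrite E2 => /leq_trans/(_ AB_le1).
Qed.

Lemma not_induced_connected_partition (X : {set T}) :
  ~~ induced_connected e X ->
  exists A B, [/\ A :|: B = X, A :&: B = set0, 0 < #|A|, 0 < #|B| &
    {in X &, forall x y, e x y ->
       (x \in A) && (y \in A) || (x \in B) && (y \in B)}].
Proof.
move=> /forall_inPn[x Xx /forall_inPn[y Xy not_xy]].
set eX := [rel a b | _] in not_xy.
pose A := [set z in X | connect eX x z].
have closedA a b : a \in X -> b \in X -> e a b -> a \in A -> b \in A.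
  rewrite !inE => Xa Xb eab /andP[_ xa]; rewrite Xb.
  by apply: connect_trans xa (connect1 _); rewrite /= eab Xa Xb.
have subAX : A \subset X by apply/subsetP => z; rewrite inE => /andP[].
have Ax : x \in A by rewrite inE Xx connect0.
have nAy : y \notin A by rewrite inE Xy.
clearbody A.
exists A, (X :\: A); split.
- by rewrite -{1}(setIidPr subAX) setID.
- by rewrite setDE setICA setICr setI0.
- by apply/card_gt0P; exists x.
- by apply/card_gt0P; exists y; rewrite inE nAy.
move=> a b Xa Xb eab; rewrite !inE Xa Xb /=.
have [Aa|nAa] := boolP (a \in A); first by rewrite (closedA a b).
by rewrite /= andbT; apply: contra nAa; apply: closedA; rewrite // e_sym.
Qed.

Definition separation (S A B : {set T}) : Prop :=
  [/\ A :|: B = S, #|A :&: B| <= 1, #|A| < #|S|, #|B| < #|S| &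
      {in S &, forall x y, e x y ->
         (x \in A) && (y \in A) || (x \in B) && (y \in B)}].

Lemma separation_of_disconnected (S : {set T}) :
  ~~ induced_connected e S -> exists A B, separation S A B.
Proof.
case/not_induced_connected_partition=> A [B [AB_S AB0 A_gt0 B_gt0 AB_edges]].
have cardS : #|S| = #|A| + #|B| by rewrite -AB_S cardsU AB0 cards0 subn0.
by exists A, B; split; rewrite ?AB0 ?cards0 //; lia.
Qed.

Lemma separation_of_cut_vertex (S : {set T}) (v : T) : v \in S ->
  ~~ induced_connected e (S :\ v) -> exists A B, separation S A B.
Proof.
move=> Sv /not_induced_connected_partition[A [B]].
case=> AB_Sv AB0 A_gt0 B_gt0 AB_edges.
have memAB z : z \in S -> z != v -> (z \in A) || (z \in B).
  by move=> Sz zv; rewrite -in_setU AB_Sv !inE zv.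
have /norP[nAv nBv] : ~~ ((v \in A) || (v \in B)).
  by rewrite -in_setU AB_Sv setD11.
have cardS : #|S| = (#|A| + #|B|).+1.
  by rewrite (cardsD1 v S) Sv -AB_Sv cardsU AB0 cards0 subn0.
exists (v |: A), (v |: B); split.
- by rewrite -setUUr AB_Sv setD1K.
- by rewrite -setUIr AB0 setU0 cards1.
- by rewrite cardsU1 nAv cardS; lia.
- by rewrite cardsU1 nBv cardS; lia.
move=> x y Sx Sy exy; rewrite !in_setU1.
have [xv|xv] := eqVneq x v; have [yv|yv] := eqVneq y v => /=.
- by move: exy; rewrite xv yv e_irr.
- exact: memAB.
- by rewrite !andbT; exact: memAB.
have Sv_x : x \in S :\ v by rewrite !inE xv.
have Sv_y : y \in S :\ v by rewrite !inE yv.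
exact: AB_edges.
Qed.

Lemma separation_of_not_biconnected (S : {set T}) :
  1 < #|S| -> ~~ biconnected e S -> exists A B, separation S A B.
Proof.
rewrite /biconnected => -> /=; case/nandP=> [|/forall_inPn[v Sv]].
  exact: separation_of_disconnected.
exact: separation_of_cut_vertex.
Qed.

Lemma has_K4_of_clique (X : {set T}) :
  #|X| = 4 -> {in X &, forall x y, x != y -> e x y} -> has_K4 e.
Proof.
move=> X4 cliqueX; pose f (i : 'I_4) := enum_val (cast_ord (esym X4) i).
have inj_f : injective f by move=> i j /enum_val_inj/cast_ord_inj.
exists f; split=> // i j neq_ij; apply: cliqueX; rewrite ?enum_valP //.
by apply: contra neq_ij => /eqP/inj_f ->.
Qed.

Lemma num_edges_in_small (S : {set T}) : ~ has_K4 e -> 1 < #|S| <= 4 ->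
  num_edges_in S + 3 <= 2 * #|S|.
Proof.
move=> noK4 /andP[S_gt1 S_le4].
have not_clique : #|S| = 4 -> num_edges_in S < 'C(#|S|, 2).
  move=> S4; rewrite ltn_neqAle num_edges_in_le_bin andbT.
  by apply/eqP => /num_edges_in_clique/(has_K4_of_clique S4).
have := num_edges_in_le_bin S.
case: #|S| S_gt1 S_le4 not_clique => [|[|[|[|[|n]]]]] //= _ _; rewrite bin2 /=.
- by move=> _; lia.
- by move=> _; lia.
- by move=> /(_ erefl); lia.
Qed.

Lemma biconnected_sub_block (S : {set T}) :
  biconnected e S -> exists2 B, is_block e B & S \subset B.
Proof.
move=> bicS; pose P B := biconnected e B && (S \subset B).
have [|B /andP[bicB subSB] maxB] := @arg_maxnP _ S P (fun B => #|B|).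
  by rewrite /P bicS subxx.
exists B => //; split=> // B' /[dup] /proper_card ltBB' /proper_sub subBB'.
apply/negP => bicB'.
have /maxB : P B' by rewrite /P bicB' (subset_trans subSB subBB').
by move/(leq_trans ltBB'); rewrite ltnn.
Qed.

Lemma separation_bound (S A B : {set T}) : separation S A B ->
    (forall X : {set T}, #|X| < #|S| -> 1 < #|X| ->
       num_edges_in X + 3 <= 2 * #|X|) ->
  num_edges_in S + 3 <= 2 * #|S|.
Proof.
case=> AB_S AB_le1 ltAS ltBS AB_edges IH.
(* The truncated 2 - #|X| is the slack of 1 needed by a single vertex. *)
have bound (X : {set T}) : #|X| < #|S| -> 0 < #|X| ->
    num_edges_in X + 3 <= 2 * #|X| + (2 - #|X|).
  move=> ltXS X_gt0; have [X_le1|X_gt1] := leqP #|X| 1.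
    have := num_edges_in_le_bin X; rewrite bin_small; lia.
  have := IH X ltXS X_gt1; lia.
have cardAB := cardsUI A B; rewrite AB_S in cardAB.
have -> : num_edges_in S = num_edges_in A + num_edges_in B.
  by rewrite -AB_S num_edges_inU // AB_S.
have A_gt0 : 0 < #|A| by lia.
have B_gt0 : 0 < #|B| by lia.
have := bound A ltAS A_gt0; have := bound B ltBS B_gt0; lia.
Qed.

Lemma num_edges_in_le (S : {set T}) : ~ has_K4 e ->
    (forall B : {set T}, is_block e B -> #|B| <= 4) ->
  1 < #|S| -> num_edges_in S + 3 <= 2 * #|S|.
Proof.
move=> noK4 small_blocks; have [n] := ubnP #|S|.
elim: n S => // n IH S ltSn S_gt1.
have [bicS|not_bicS] := boolP (biconnected e S).
  apply: num_edges_in_small noK4 _; rewrite S_gt1 /=.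
  have [B blockB subSB] := biconnected_sub_block bicS.
  exact: leq_trans (subset_leq_card subSB) (small_blocks B blockB).
have [A [B sepAB]] := separation_of_not_biconnected S_gt1 not_bicS.
apply: (separation_bound sepAB) => X ltXS; apply: IH.
exact: leq_trans ltXS ltSn.
Qed.

End BlockBound.

Lemma num_edges_le (T : finType) (e : rel T) : simple_graph e -> ~ has_K4 e ->
    (forall S : {set T}, is_block e S -> #|S| <= 4) ->
  1 < #|T| -> num_edges e + 3 <= 2 * #|T|.
Proof.
case=> e_sym e_irr noK4 small_blocks T_gt1.
rewrite -num_edges_inT -cardsT; apply: num_edges_in_le => //.
by rewrite cardsT.
Qed.

Local Open Scope ring_scope.

Theorem corollary2 (T : finType) (e : rel T) :
  simple_graph e ->
  planar e ->
  (2 <= #|T|)%nat ->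
  ~ has_K4 e ->
  ~ has_C5 e ->
  (forall S : {set T}, is_block e S -> (#|S| <= 4)%nat) ->
  ((num_edges e)%:R : R) <= 2 * (#|T|)%:R - 15%:R / 7%:R.
Proof.
move=> simple_e _ T_gt1 noK4 _ small_blocks.
have := num_edges_le simple_e noK4 small_blocks T_gt1.
rewrite -(ler_nat R) natrD natrM => edge_bound.
have : (15%:R / 7%:R : R) <= 3 by rewrite ler_pdivrMr ?ltr0n // -natrM ler_nat.
lra.
Qed.
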